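(* Let $\mathbf{u}=(u_1,u_2)\in\mathbb{R}[x_1,x_2]_d^2$ and $p\in\Sigma[x_1,x_2]_{2d}$, and suppose $\nabla f_p(\mathbf{u})=0$ and $\nabla^2 f_p(\mathbf{u})\succeq0$. Let $g,h,u_1',u_2'$ be real binary forms with $(u_1,u_2)=(u_1'gh,u_2'gh)$, $\gcd(u_1,u_2)=gh$, $\gcd(u_1',u_2')=1$, $\gcd(u_1'^2+u_2'^2,g)=1$, and every (possibly complex) root of $h$ a root of $u_1'^2+u_2'^2$. Let $k=\deg(h)$ and let $\mathbf{w}=(u_1'gx_1^k,\,u_2'gx_1^k)\in\mathbb{R}[x_1,x_2]_d^2$. If $$p\in\operatorname{im}(\mathcal{A}_{\mathbf{w}})+\operatorname{cone}\big(\sigma(\ker(\mathcal{A}_{\mathbf{u}}))\big),$$ then $f_p(\mathbf{u})=0$.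
   Context: $\mathbb{R}[x_1,x_2]_n$ denotes the space of real binary forms of degree $n$, and $\Sigma[x_1,x_2]_{2d}$ the cone of sums of squares of binary forms of degree $d$. For $\mathbf{a}=(a_1,a_2)\in\mathbb{R}[x_1,x_2]_d^2$, $\mathcal{A}_{\mathbf{a}}:\mathbb{R}[x_1,x_2]_d^2\to\mathbb{R}[x_1,x_2]_{2d}$ is $(v_1,v_2)\mapsto a_1v_1+a_2v_2$; $\sigma(v_1,v_2)=v_1^2+v_2^2$; $\operatorname{cone}(S)$ is the set of nonnegative combinations. A root of a binary form is a nonzero complex zero up to scaling; gcd is the common divisor of highest degree, coprime means gcd constant. Fix any inner product $\langle\cdot,\cdot\rangle$ on $\mathbb{R}[x_1,x_2]_{2d}$ with norm $\|\cdot\|$ and let $f_p(\mathbf{u})=\|\sigma(\mathbf{u})-p\|^2$. $\nabla f_p(\mathbf{u})=0$ means $\langle\mathcal{A}_{\mathbf{u}}(\mathbf{v}),\sigma(\mathbf{u})-p\rangle=0$ for all $\mathbf{v}\in\mathbb{R}[x_1,x_2]_d^2$, and $\nabla^2 f_p(\mathbf{u})\succeq0$ means $\langle\sigma(\mathbf{v}),\sigma(\mathbf{u})-p\rangle+2\|\mathcal{A}_{\mathbf{u}}(\mathbf{v})\|^2\ge0$ for all $\mathbf{v}\in\mathbb{R}[x_1,x_2]_d^2$. *)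

From mathcomp Require Import all_boot all_algebra.
From mathcomp Require Import reals.
From mathcomp Require Import complex.
From mathcomp Require Import mpoly.
Import GRing.Theory Num.Theory.
Set Implicit Arguments.
Unset Strict Implicit.
Unset Printing Implicit Defensive.
Local Open Scope ring_scope.

Section BinaryForms.
Variable R : realType.
Local Notation P := {mpoly R[2]}.

Definition form (n : nat) (f : P) : Prop := f \is n.-homog.

Definition is_form (f : P) : Prop := exists n, form n f.

Definition deg_form (f : P) : nat := (msize f).-1.

Definition pdvd (a b : P) : Prop := exists c : P, b = a * c.

(* gcd(a,b) = c : c is a common divisor divisible by every common divisor
   (gcd is defined up to a nonzero scalar) *)
Definition is_gcd (a b c : P) : Prop :=
  pdvd c a /\ pdvd c b /\ (forall e : P, pdvd e a -> pdvd e b -> pdvd e c).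

Definition pcoprime (a b : P) : Prop :=
  forall e : P, pdvd e a -> pdvd e b -> (msize e <= 1)%N.

Definition evalC (f : P) (z : 'I_2 -> R[i]) : R[i] :=
  (map_mpoly (real_complex R) f).@[z].

(* root of a binary form: nonzero complex zero (up to scaling) *)
Definition is_root (f : P) (z : 'I_2 -> R[i]) : Prop :=
  (exists i, z i != 0) /\ evalC f z = 0.

Definition sigma (v : P * P) : P := v.1 ^+ 2 + v.2 ^+ 2.

Definition Aop (a v : P * P) : P := a.1 * v.1 + a.2 * v.2.

Definition form2 (d : nat) (v : P * P) : Prop := form d v.1 /\ form d v.2.

Definition sos (d : nat) (p : P) : Prop :=
  exists s : seq P, (forall q, q \in s -> form d q) /\ p = \sum_(q <- s) q ^+ 2.

Definition inner_product (n : nat) (ip : P -> P -> R) : Prop :=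
  (forall (a : R) (x y z : P), form n x -> form n y -> form n z ->
      ip (a *: x + y) z = a * ip x z + ip y z) /\
  (forall x y : P, form n x -> form n y -> ip x y = ip y x) /\
  (forall x : P, form n x -> x != 0 -> 0 < ip x x).

Definition fp (ip : P -> P -> R) (p : P) (u : P * P) : R :=
  ip (sigma u - p) (sigma u - p).

(* grad f_p(u) = 0 *)
Definition grad_zero (d : nat) (ip : P -> P -> R) (p : P) (u : P * P) : Prop :=
  forall v : P * P, form2 d v -> ip (Aop u v) (sigma u - p) = 0.

(* Hess f_p(u) is PSD *)
Definition hess_psd (d : nat) (ip : P -> P -> R) (p : P) (u : P * P) : Prop :=
  forall v : P * P, form2 d v ->
    0 <= ip (sigma v) (sigma u - p) + 2 * ip (Aop u v) (Aop u v).

Definition in_im_plus_cone (d : nat) (w u : P * P) (p : P) : Prop :=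
  exists (v : P * P) (s : seq (R * (P * P))),
    form2 d v /\
    (forall c, c \in s -> 0 <= c.1 /\ form2 d c.2 /\ Aop u c.2 = 0) /\
    p = Aop w v + \sum_(c <- s) c.1 *: sigma c.2.

End BinaryForms.

(* Write u = (a G, b G) with G = g h, a = u1', b = u2', s = a^2 + b^2 and
   E = sigma(u) - p, and call r admissible ([orth_residual r]) when
   <r (a y1 + b y2), E> = 0 for all y in R[x]_d^2.  The gradient condition says
   that G is admissible.  If r' is admissible and s r^2 = r' c, then c = a y1 + b y2
   by Bezout (a and b are coprime), so <s r^2, E> = 0; the Hessian condition along
   (b r + t y2, -a r - t y1) then reads 2 t <r (a y1 + b y2), E> + O(t^2) >= 0 for
   all t, so r is admissible.  Dehomogenize by x1 = 1: as every root of h is a root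
   of s, q = gcd(r, s) is nonconstant for every nonconstant divisor r of h, and
   s (r/q)^2 = r (s/q)(r/q) passes admissibility from g r to g (r/q); descending
   from r = h to a constant gives admissibility of g x1^k.  Finally, with
   p = A_w(v) + sum c_i sigma(y_i) and A_u(y_i) = 0,
   ||E||^2 = <sigma(u), E> - <A_w(v), E> - sum c_i <sigma(y_i), E> <= 0, as the
   first two terms vanish (gradient condition, admissibility of g x1^k) and
   <sigma(y_i), E> >= 0 by the Hessian condition. *)

From Pilot Require Import Defs.
From HB Require Import structures.
From mathcomp Require Import all_boot all_order all_algebra.
From mathcomp Require Import reals complex mpoly.
From mathcomp Require Import zify ring lra.
Import Order.TTheory GRing.Theory Num.Theory.
Set Implicit Arguments.
Unset Strict Implicit.
Unset Printing Implicit Defensive.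
Local Open Scope ring_scope.
Local Notation form := Defs.form.

Lemma bezout_size_le (R : fieldType) (A B C : {poly R}) (m d : nat) :
  coprimep A B -> size A = m.+1 -> (size B <= m.+1)%N -> (m <= d)%N ->
  (size C <= (d + m).+1)%N ->
  exists Y Z : {poly R},
    [/\ (size Y <= d.+1)%N, (size Z <= d.+1)%N & C = A * Y + B * Z].
Proof.
move=> /Bezout_eq1_coprimepP [[u v] /= Buv] szA szB le_md szC.
have nzA : A != 0 by rewrite -size_poly_gt0 szA.
pose Z := (C * v) %% A; pose Y := C * u + B * ((C * v) %/ A).
have eZ : Z = C * v - (C * v %/ A) * A.
  by rewrite /Z {2}(divp_eq (C * v) A) addrAC subrr add0r.
have eqC : C = A * Y + B * Z by rewrite eZ /Y -[LHS]mulr1 -Buv; ring.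
exists Y, Z; split=> //; first last.
  by rewrite (leq_trans _ (leq_trans le_md _)) // -ltnS -szA ltn_modp.
have [->|nzY] := eqVneq Y 0; first by rewrite size_poly0.
have szZ : (size Z <= m)%N by rewrite -ltnS -szA ltn_modp.
have szAY : size (A * Y) = (m + size Y)%N by rewrite size_mul // szA.
have := size_polyD C (- (B * Z)); rewrite size_polyN.
have -> : C - B * Z = A * Y by rewrite eqC addrK.
rewrite szAY; have := size_polyMleq B Z.
move: szZ szB szC; move: (size (B * Z)) (size B) (size Z) (size C) (size Y) => *; lia.
Qed.

Section Dehomogenization.
Variable R : fieldType.
Local Notation P := {mpoly R[2]}.
Implicit Types (f g : P) (Q : {poly R}).

Lemma dhomogM_eq i j n f g :
  f \is i.-homog -> g \is j.-homog -> (i + j)%N = n -> f * g \is n.-homog.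
Proof. by move=> homf homg <-; apply: dhomogM. Qed.

Lemma dhomogX0n n : ('X_0 : P) ^+ n \is n.-homog.
Proof.
by rewrite -[X in X.-homog]mul1n; apply: dhomogMn; rewrite dhomogX /= mdeg1.
Qed.

Definition dehom_pt (i : 'I_2) : {poly R} := if i == ord0 then 1 else 'X.
Definition dehom : P -> {poly R} := mmap (@polyC R) dehom_pt.
HB.instance Definition _ := GRing.RMorphism.on dehom.

Lemma dehomZ c f : dehom (c *: f) = c *: dehom f.
Proof. by rewrite /dehom mmapZ mul_polyC. Qed.

Lemma dehomC c : dehom c%:MP = c%:P.
Proof. exact: mmapC. Qed.

Lemma dehomX m : dehom 'X_[m] = 'X^(m ord_max).
Proof.
rewrite /dehom mmapX /mmap1 big_ord_recl big_ord1 /dehom_pt /= expr1n mul1r.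
by congr ('X^(m _)); apply: val_inj.
Qed.

Lemma dehomX0 : dehom 'X_0 = 1.
Proof. by rewrite dehomX mnm1E. Qed.

Lemma dehomE f : dehom f = \sum_(m <- msupp f) f@_m *: 'X^(m ord_max).
Proof.
rewrite {1}(mpolyE f) rmorph_sum /=; apply: eq_bigr => m _.
by rewrite dehomZ dehomX.
Qed.

Definition monom2 (i j : nat) : 'X_{1..2} :=
  [multinom (if k == ord0 then i else j) | k < 2].

Lemma monom2_eta (m : 'X_{1..2}) : m = monom2 (m ord0) (m ord_max).
Proof.
by apply/mnmP => -[[|[|]] //= lt_k2]; rewrite mnmE //; congr (m _); apply: val_inj.
Qed.

Lemma mdeg_monom2 i j : mdeg (monom2 i j) = (i + j)%N.
Proof. by rewrite mdegE big_ord_recl big_ord1 !mnmE. Qed.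

Lemma mdeg2 (m : 'X_{1..2}) : mdeg m = (m ord0 + m ord_max)%N.
Proof. by rewrite {1}(monom2_eta m) mdeg_monom2. Qed.

Definition hom (n : nat) Q : P := \sum_(j < n.+1) Q`_j *: 'X_[monom2 (n - j) j].

Lemma hom_is_linear n : linear (hom n).
Proof.
move=> c Q1 Q2; rewrite /hom scaler_sumr -big_split /=; apply: eq_bigr => j _.
by rewrite coefD coefZ scalerDl scalerA.
Qed.
HB.instance Definition _ n :=
  GRing.isLinear.Build R {poly R} P _ (hom n) (hom_is_linear n).

Lemma hom_homog n Q : hom n Q \is n.-homog.
Proof.
apply: rpred_sum => j _; apply: rpredZ; apply/dhomogP => m.
by rewrite msuppX inE => /eqP -> /=; rewrite mdeg_monom2 subnK // -ltnS.
Qed.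

Lemma homK n Q : (size Q <= n.+1)%N -> dehom (hom n Q) = Q.
Proof.
move=> szQ; rewrite /hom rmorph_sum /=.
under eq_bigr => j _ do rewrite dehomZ dehomX mnmE.
rewrite -poly_def; apply/polyP => j; rewrite coef_poly.
by case: ltnP => // le_n_j; rewrite nth_default // (leq_trans szQ le_n_j).
Qed.

Lemma hom_Xn n k : (k <= n)%N -> hom n 'X^k = 'X_[monom2 (n - k) k].
Proof.
rewrite -ltnS => lt_k_n1; rewrite /hom (bigD1 (Ordinal lt_k_n1)) //= big1.
  by rewrite coefXn eqxx scale1r addr0.
move=> j ne_jk; rewrite coefXn (_ : (j == k :> nat) = false) ?scale0r //.
exact/negbTE.
Qed.

Lemma dehomK n f : f \is n.-homog -> hom n (dehom f) = f.
Proof.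
move=> /dhomogP homf; rewrite dehomE linear_sum /= [RHS](mpolyE f) !big_seq.
apply: eq_bigr => m /homf mdeg_m; have := mdeg2 m; rewrite mdeg_m => ->.
by rewrite linearZ /= hom_Xn ?leq_addl // addnK -monom2_eta.
Qed.

Lemma dehom_homog_inj n f g :
  f \is n.-homog -> g \is n.-homog -> dehom f = dehom g -> f = g.
Proof. by move=> homf homg eq_fg; rewrite -(dehomK homf) -(dehomK homg) eq_fg. Qed.

Lemma dehom_homog_eq0 n f : f \is n.-homog -> (dehom f == 0) = (f == 0).
Proof.
move=> homf; apply/eqP/eqP => [|->]; last exact: rmorph0.
by rewrite -(rmorph0 dehom) => /(dehom_homog_inj homf (dhomog0 _ _ _)).
Qed.

Lemma size_dehom_homog n f : f \is n.-homog -> (size (dehom f) <= n.+1)%N.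
Proof.
move=> /dhomogP homf; rewrite dehomE (leq_trans (size_sum _ _ _)) //.
apply/bigmax_leqP_seq => m /homf mdeg_m _; have := mdeg2 m; rewrite mdeg_m => ->.
by rewrite (leq_trans (size_scale_leq _ _)) // size_polyXn ltnS leq_addl.
Qed.

Lemma homog_size_dehom_le1 n f :
  f \is n.-homog -> (size (dehom f) <= 1)%N -> f = (dehom f)`_0 *: 'X_0 ^+ n.
Proof.
move=> homf /size1_polyC szf; apply: (dehom_homog_inj homf).
  by apply/rpredZ/dhomogX0n.
by rewrite dehomZ rmorphXn /= dehomX0 expr1n alg_polyC -szf.
Qed.

Lemma homog_bezout m d (a b c : P) :
  coprimep (dehom a) (dehom b) -> a \is m.-homog -> b \is m.-homog ->
  size (dehom a) = m.+1 -> (m <= d)%N -> c \is (d + m).-homog ->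
  exists y1 y2, [/\ y1 \is d.-homog, y2 \is d.-homog & c = a * y1 + b * y2].
Proof.
move=> cop homa homb sza le_md homc.
have [Y [Z [szY szZ eqc]]] :=
  bezout_size_le cop sza (size_dehom_homog homb) le_md (size_dehom_homog homc).
exists (hom d Y), (hom d Z); split; try exact: hom_homog.
apply: (dehom_homog_inj homc).
  by rewrite addnC rpredD ?dhomogM ?hom_homog.
by rewrite rmorphD !rmorphM /= !homK.
Qed.

Lemma dvdp_dehom_homog n f D :
  f \is n.-homog -> D %| dehom f -> exists c, f = hom (size D).-1 D * c.
Proof.
move=> homf /dvdpP [Q eqf].
have [->|nzf] := eqVneq f 0; first by exists 0; rewrite mulr0.
have : dehom f != 0 by rewrite (dehom_homog_eq0 homf).
rewrite eqf mulf_eq0 negb_or => /andP [nzQ nzD].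
have := size_dehom_homog homf; rewrite eqf size_mul //.
rewrite -!size_poly_gt0 in nzQ nzD => le_szf.
have [le_D le_Q] : ((size D).-1 <= n)%N /\ (size Q <= (n - (size D).-1).+1)%N.
  by move: nzQ nzD le_szf; move: (size Q) (size D) => q e; lia.
exists (hom (n - (size D).-1) Q); apply: (dehom_homog_inj homf).
  by apply: dhomogM_eq (hom_homog _ _) (hom_homog _ _) _; rewrite subnKC.
by rewrite rmorphM /= !homK ?eqf 1?mulrC // prednK.
Qed.

Lemma dvd_X0_homog n f :
  f \is n.-homog -> (size (dehom f) <= n)%N -> exists c, f = 'X_0 * c.
Proof.
case: n => [|n] homf szf.
  by exists 0; apply/eqP; rewrite mulr0 -(dehom_homog_eq0 homf) -size_poly_eq0 -leqn0.
exists (hom n (dehom f)); apply: (dehom_homog_inj homf).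
  by apply: dhomogM_eq (hom_homog _ _) _; rewrite ?dhomogX /= ?mdeg1.
by rewrite rmorphM /= dehomX0 mul1r homK.
Qed.

Lemma homog_cofactor j n f G :
  (exists i, f \is i.-homog) -> G \is j.-homog -> G != 0 ->
  f * G \is n.-homog -> f != 0 -> (j <= n)%N /\ f \is (n - j).-homog.
Proof.
move=> [i homf] homG nzG homfG nzf.
have <- : (i + j)%N = n := dhomog_uniq (mulf_neq0 nzf nzG) (dhomogM homf homG) homfG.
by rewrite leq_addl addnK.
Qed.

End Dehomogenization.

Lemma sqr_add_sqr_poly_eq0 (R : realDomainType) (A B : {poly R}) :
  A ^+ 2 + B ^+ 2 = 0 -> A = 0.
Proof.
move=> AB0; apply: (@roots_geq_poly_eq0 _ A [seq i%:R | i <- iota 0 (size A)]).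
- apply/allP => _ /mapP [i _ ->]; apply/eqP.
  move/(congr1 (horner^~ i%:R))/eqP: AB0.
  rewrite hornerD !horner_exp horner0 paddr_eq0 ?sqr_ge0 // => /andP [].
  by rewrite sqrf_eq0 => /eqP.
- by rewrite map_inj_uniq ?iota_uniq // => i j /eqP; rewrite eqr_nat => /eqP.
- by rewrite size_map size_iota.
Qed.

Section ComplexRoots.
Variable R : rcfType.
Local Notation toC := (map_poly (real_complex R)).

Definition roots_subset (Q S : {poly R}) : Prop :=
  forall x : R[i], root (toC Q) x -> root (toC S) x.

Lemma roots_subset_dvdp Q' Q S : Q' %| Q -> roots_subset Q S -> roots_subset Q' S.
Proof. by move=> dvdQ sub x rootx; apply/sub/(root_dvdp _ rootx); rewrite dvdp_map. Qed.

Lemma roots_subset0 S : roots_subset 0 S -> S = 0.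
Proof.
move=> sub; apply/eqP; apply: contraT => nzS.
have /closed_nonrootP [x] : toC S != 0 by rewrite map_poly_eq0.
by rewrite sub // rmorph0 root0.
Qed.

Lemma size_gcdp_roots_subset Q S :
  roots_subset Q S -> (1 < size Q)%N -> (1 < size (gcdp Q S))%N.
Proof.
move=> sub szQ; have : size (toC Q) != 1%N by rewrite size_map_poly gtn_eqF.
case/closed_rootP => x rootx.
have nzQ : gcdp Q S != 0 by rewrite gcdp_eq0 negb_and -size_poly_gt0 ltnW.
rewrite -(size_map_poly (real_complex R)) (@root_size_gt1 _ x) ?map_poly_eq0 //.
by rewrite gcdp_map root_gcd rootx sub.
Qed.

End ComplexRoots.

Section BinaryForms.
Variable R : realType.
Local Notation P := {mpoly R[2]}.
Implicit Types (a b f h s : P).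

Definition affine_pt (x : R[i]) (i : 'I_2) : R[i] := if i == ord0 then 1 else x.

Lemma evalC_affine_pt f x :
  evalC f (affine_pt x) = (map_poly (real_complex R) (dehom f)).[x].
Proof.
have evalCD g1 g2 z : evalC (g1 + g2) z = evalC g1 z + evalC g2 z.
  by rewrite /evalC !rmorphD.
elim/mpolyind: f => [|c m f _ _ IH]; first by rewrite /evalC !rmorph0 horner0.
rewrite evalCD IH rmorphD (raddfD (map_poly _)) hornerD; congr (_ + _).
rewrite /evalC map_mpolyZ mevalZ map_mpolyX mevalX /= dehomZ dehomX.
rewrite big_ord_recl big_ord1 /affine_pt /= expr1n mul1r.
rewrite -mul_polyC rmorphM /= map_polyC map_polyXn hornerM hornerC hornerXn.
by congr (_ * x ^+ (m _)); apply: val_inj.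
Qed.

Lemma roots_subset_dehom h s :
  (forall z, is_root h z -> is_root s z) -> roots_subset (dehom h) (dehom s).
Proof.
move=> sub x; rewrite /root -!evalC_affine_pt => /eqP rooth.
suff [_ ->] : is_root s (affine_pt x) by [].
by apply: sub; split=> //; exists ord0; rewrite /affine_pt eqxx oner_neq0.
Qed.

Lemma not_pcoprime_X0 a b : pdvd 'X_0 a -> pdvd 'X_0 b -> ~ pcoprime a b.
Proof. by move=> dvda dvdb /(_ _ dvda dvdb); rewrite msizeX mdeg1. Qed.

Lemma not_pcoprime0 : ~ pcoprime (0 : P) 0.
Proof. by apply: not_pcoprime_X0; exists 0; rewrite mulr0. Qed.

Lemma pcoprime_dehom m a b :
  pcoprime a b -> form m a -> form m b -> coprimep (dehom a) (dehom b).
Proof.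
move=> cop homa homb; apply/coprimepP => D.
move=> /(dvdp_dehom_homog homa) [c1 ea] /(dvdp_dehom_homog homb) [c2 eb].
have [D0|nzD] := eqVneq D 0.
  by move: ea eb cop; rewrite D0 linear0 !mul0r => -> -> /not_pcoprime0.
have /msize1_polyC eC := cop _ (ex_intro _ c1 ea) (ex_intro _ c2 eb).
rewrite -size_poly_eq1 eqn_leq size_poly_gt0 nzD andbT -[D](homK (leqSpred (size D))).
by rewrite eC dehomC size_polyC_leq1.
Qed.

Lemma pcoprime_size_dehom m a b : pcoprime a b -> form m a -> form m b ->
  size (dehom a) = m.+1 \/ size (dehom b) = m.+1.
Proof.
move=> cop homa homb.
have [lt_a|] := ltnP (size (dehom a)) m.+1; last first.
  by left; apply/eqP; rewrite eqn_leq size_dehom_homog.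
have [lt_b|] := ltnP (size (dehom b)) m.+1; last first.
  by right; apply/eqP; rewrite eqn_leq size_dehom_homog.
by exfalso; apply: (not_pcoprime_X0 _ _ cop); [apply: dvd_X0_homog homa lt_a |
  apply: dvd_X0_homog homb lt_b].
Qed.

Lemma pcoprime_bezout m d a b c : pcoprime a b -> form m a -> form m b ->
  (m <= d)%N -> form (d + m) c -> exists2 y, form2 d y & c = Aop (a, b) y.
Proof.
move=> cop homa homb le_md homc; have copD := pcoprime_dehom cop homa homb.
case: (pcoprime_size_dehom cop homa homb) => sz.
  have [y1 [y2 [? ? ->]]] := homog_bezout copD homa homb sz le_md homc.
  by exists (y1, y2).
rewrite coprimep_sym in copD.
have [y1 [y2 [? ? ->]]] := homog_bezout copD homb homa sz le_md homc.
by exists (y2, y1); rewrite // /Aop addrC.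
Qed.

Lemma roots_subset_sqr_add_neq0 a b h : pcoprime a b -> is_form a -> is_form b ->
  roots_subset (dehom h) (dehom (a ^+ 2 + b ^+ 2)) -> h != 0.
Proof.
move=> cop [na homa] [nb homb] sub; apply/eqP => h0; move: sub.
rewrite h0 rmorph0 => /roots_subset0; rewrite rmorphD !rmorphXn /= => sqr0.
have /eqP := sqr_add_sqr_poly_eq0 sqr0; rewrite (dehom_homog_eq0 homa) => /eqP a0.
rewrite addrC in sqr0; have /eqP := sqr_add_sqr_poly_eq0 sqr0.
rewrite (dehom_homog_eq0 homb) => /eqP b0.
by move: cop; rewrite a0 b0; apply: not_pcoprime0.
Qed.

Lemma pcoprime_cofactor j n a b G : pcoprime a b -> is_form a -> is_form b ->
  form j G -> G != 0 -> form n (a * G) -> form n (b * G) ->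
  exists2 m, (j + m)%N = n & form m a /\ form m b.
Proof.
move=> cop forma formb homG nzG homaG hombG.
have cof f : is_form f -> form n (f * G) -> form (n - j) f /\ (f != 0 -> (j <= n)%N).
  move=> formf homfG; have [->|nzf] := eqVneq f 0; first by split=> //; apply: dhomog0.
  by have [] := homog_cofactor formf homG nzG homfG nzf.
have [homa le_a] := cof _ forma homaG; have [homb le_b] := cof _ formb hombG.
exists (n - j)%N => //; apply: subnKC.
have [a0|] := eqVneq a 0; last exact: le_a.
have [b0|] := eqVneq b 0; last exact: le_b.
by move: cop; rewrite a0 b0 => /not_pcoprime0.
Qed.

Lemma deg_form_homog n f : form n f -> f != 0 -> deg_form f = n.
Proof.
move=> homf nzf; rewrite /deg_form.
exact: (dhomog_uniq nzf (dhomog_msize homf) homf).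
Qed.

Lemma sigma_form d (y : P * P) : form2 d y -> form (2 * d) (sigma y).
Proof.
by case=> formy1 formy2; rewrite /form /sigma !expr2 mul2n -addnn rpredD ?dhomogM.
Qed.

Lemma Aop_mulr a b c (y : P * P) : Aop (a * c, b * c) y = c * Aop (a, b) y.
Proof. by rewrite /Aop /=; ring. Qed.

Lemma sos_form d (p : P) : sos d p -> form (2 * d) p.
Proof.
case=> s [forms ->]; rewrite big_seq; apply: rpred_sum => q /forms formq.
by rewrite expr2 mul2n -addnn; apply: dhomogM.
Qed.

End BinaryForms.

Section InnerProduct.
Variables (R : realType) (n : nat) (ip : {mpoly R[2]} -> {mpoly R[2]} -> R).
Hypothesis ipP : inner_product n ip.
Implicit Types x y z : {mpoly R[2]}.

Lemma ip0l z : form n z -> ip 0 z = 0.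
Proof.
case: ipP => lin _ formz; have := lin 1 0 0 z (dhomog0 _ _ _) (dhomog0 _ _ _) formz.
by rewrite scale1r addr0 mul1r; lra.
Qed.

Lemma ipDl x y z : form n x -> form n y -> form n z -> ip (x + y) z = ip x z + ip y z.
Proof. by case: ipP => lin _ *; rewrite -[x]scale1r lin // scale1r mul1r. Qed.

Lemma ipZl c x z : form n x -> form n z -> ip (c *: x) z = c * ip x z.
Proof.
case: ipP => lin _ formx formz.
by have := lin c x 0 z formx (dhomog0 _ _ _) formz; rewrite addr0 ip0l // addr0.
Qed.

Lemma ipBl x y z : form n x -> form n y -> form n z -> ip (x - y) z = ip x z - ip y z.
Proof.
move=> formx formy formz.
by have := ipDl (rpredB formx formy) formy formz; rewrite subrK => ->; rewrite addrK.
Qed.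

Lemma ipZ c x : form n x -> ip (c *: x) (c *: x) = c ^+ 2 * ip x x.
Proof.
case: ipP => _ [sym _] formx; have formcx : form n (c *: x) := rpredZ c formx.
by rewrite ipZl // sym // ipZl // mulrA -expr2.
Qed.

Lemma ip_ge0 x : form n x -> 0 <= ip x x.
Proof.
case: ipP => _ [_ pos] formx; have [->|/(pos _ formx)/ltW //] := eqVneq x 0.
by rewrite ip0l //; apply: dhomog0.
Qed.

Lemma ip_suml (I : eqType) (r : seq I) (F : I -> {mpoly R[2]}) z :
  (forall i, i \in r -> form n (F i)) -> form n z ->
  ip (\sum_(i <- r) F i) z = \sum_(i <- r) ip (F i) z.
Proof.
elim: r => [|i r IH] formF formz; first by rewrite !big_nil ip0l.
have formFr j : j \in r -> form n (F j) by move=> rj; apply: formF; rewrite inE rj orbT.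
have formFi : form n (F i) by apply: formF; rewrite mem_head.
have formS : form n (\sum_(j <- r) F j) by rewrite big_seq; apply: rpred_sum => j /formFr.
by rewrite !big_cons ipDl // IH.
Qed.

End InnerProduct.

Lemma lin_eq0_of_quad_ge0 (R : realFieldType) (L C : R) :
  (forall t, 0 <= t * L + t ^+ 2 * C) -> L = 0.
Proof.
move=> quad_ge0; pose k := `|C| + 1.
have k_gt0 : 0 < k by rewrite /k ltr_pwDr ?normr_ge0.
have C_lt_k : C < k by rewrite /k (le_lt_trans (ler_norm C)) // ltrDl.
have := quad_ge0 (- (L / k)).
have -> : - (L / k) * L + (- (L / k)) ^+ 2 * C = (L / k) ^+ 2 * (C - k).
  by field; rewrite gt_eqF.
rewrite nmulr_lge0 ?subr_lt0 // => sqr_le0.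
have : (L / k) ^+ 2 == 0 by rewrite eq_le sqr_le0 sqr_ge0.
by rewrite sqrf_eq0 mulf_eq0 invr_eq0 (gt_eqF k_gt0) orbF => /eqP.
Qed.

Lemma fp_eq0_of_cone (R : realType) d ip (p q : {mpoly R[2]})
    (u : {mpoly R[2]} * {mpoly R[2]}) (s : seq (R * ({mpoly R[2]} * {mpoly R[2]}))) :
  inner_product (2 * d) ip -> form2 d u ->
  grad_zero d ip p u -> hess_psd d ip p u -> form (2 * d) p ->
  (forall c, c \in s -> 0 <= c.1 /\ form2 d c.2 /\ Aop u c.2 = 0) ->
  p = q + \sum_(c <- s) c.1 *: sigma c.2 -> ip q (sigma u - p) = 0 ->
  fp ip p u = 0.
Proof.
move=> ipP homu grad hess homp cone eqp orthq.
set E := sigma u - p; set S := \sum_(c <- s) c.1 *: sigma c.2.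
have formS : form (2 * d) S.
  by rewrite /S big_seq; apply: rpred_sum => c /cone [_ [/sigma_form ? _]]; apply: rpredZ.
have formq : form (2 * d) q by have := rpredB homp formS; rewrite eqp addrK.
have formu : form (2 * d) (sigma u) := sigma_form homu.
have formE : form (2 * d) E by apply: rpredB.
have orthu : ip (sigma u) E = 0.
  by rewrite (_ : sigma u = Aop u u) ?grad // /sigma /Aop !expr2.
have S_ge0 : 0 <= ip S E.
  rewrite (ip_suml ipP) // => [|c /cone [_ [/sigma_form ? _]]]; last exact: rpredZ.
  rewrite big_seq sumr_ge0 // => c /cone [c_ge0 [formc Ac0]].
  rewrite (ipZl ipP _ (sigma_form formc) formE) mulr_ge0 //.
  by have := hess _ formc; rewrite Ac0 (ip0l ipP) ?mulr0 ?addr0 //; apply: dhomog0.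
have E_ge0 := ip_ge0 ipP formE.
have eqE : E = sigma u - q - S by rewrite /E eqp opprD addrA.
have : ip E E = - ip S E.
  rewrite {1}eqE !(ipBl ipP) // ?orthu ?orthq ?subr0 ?sub0r //; exact: rpredB.
rewrite /fp -/E; lra.
Qed.

Section CriticalPoint.
Variables (R : realType) (d m D : nat) (ip : {mpoly R[2]} -> {mpoly R[2]} -> R).
Variables (p a b G : {mpoly R[2]}).
Hypotheses (ipP : inner_product (2 * d) ip) (homa : form m a) (homb : form m b).
Hypotheses (homG : form D G) (eq_d : (D + m)%N = d) (homp : form (2 * d) p).
Local Notation E := (sigma (a * G, b * G) - p).

Definition orth_residual (r : {mpoly R[2]}) : Prop :=
  forall y, form2 d y -> ip (r * Aop (a, b) y) E = 0.

Lemma orth_residual_of_grad : grad_zero d ip p (a * G, b * G) -> orth_residual G.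
Proof.
by move=> grad y formy; rewrite -(grad y formy) Aop_mulr.
Qed.

Lemma orth_residualZ c r : c != 0 -> orth_residual (c *: r) -> orth_residual r.
Proof.
move=> nzc orth_cr y [formy1 formy2].
have -> : r * Aop (a, b) y = (c *: r) * Aop (a, b) (c^-1 *: y.1, c^-1 *: y.2).
  by rewrite /Aop /= -!scalerAr -scalerDr -scalerAr -scalerAl scalerA mulVf ?scale1r.
by apply: orth_cr; split; apply: rpredZ.
Qed.

Lemma form_residual : form (2 * d) E.
Proof.
apply: rpredB homp; apply: sigma_form.
by split; [apply: dhomogM_eq homa homG _ | apply: dhomogM_eq homb homG _]; rewrite addnC.
Qed.

Lemma form_Aop y : form2 d y -> form (m + d) (Aop (a, b) y).
Proof. by case=> formy1 formy2; apply: rpredD; apply: dhomogM. Qed.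

Hypothesis hess : hess_psd d ip p (a * G, b * G).

Lemma orth_residual_of_sqr r :
  form D r -> ip ((a ^+ 2 + b ^+ 2) * r ^+ 2) E = 0 -> orth_residual r.
Proof.
move=> homr orth y formy; case: (formy) => formy1 formy2.
have formE := form_residual.
pose v t := (b * r + t *: y.2, - (a * r) - t *: y.1).
pose w := G * (a * y.2 - b * y.1).
have formsr : form (2 * d) ((a ^+ 2 + b ^+ 2) * r ^+ 2).
  apply: dhomogM_eq (rpredD (dhomogMn 2 homa) (dhomogMn 2 homb)) (dhomogMn 2 homr) _.
  by rewrite -eq_d; lia.
have formry : form (2 * d) (r * Aop (a, b) y).
  by apply: dhomogM_eq homr (form_Aop formy) _; rewrite -eq_d; lia.
have formw : form (2 * d) w.
  apply: dhomogM_eq homG (rpredB (dhomogM homa formy2) (dhomogM homb formy1)) _.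
  by rewrite -eq_d; lia.
have formsy := sigma_form formy.
have formv t : form2 d (v t).
  have homar : form d (a * r) by apply: dhomogM_eq homa homr _; rewrite addnC.
  have hombr : form d (b * r) by apply: dhomogM_eq homb homr _; rewrite addnC.
  by split; apply: rpredB || apply: rpredD; rewrite ?rpredN //; apply: rpredZ.
have sigma_v t : sigma (v t) =
    (a ^+ 2 + b ^+ 2) * r ^+ 2 + (t + t) *: (r * Aop (a, b) y) + (t * t) *: sigma y.
  by rewrite /sigma /v /Aop /= -!mul_mpolyC mpolyCD mpolyCM; ring.
have Aop_v t : Aop (a * G, b * G) (v t) = t *: w.
  by rewrite /Aop /v /w /= -!mul_mpolyC; ring.
suff : 2 * ip (r * Aop (a, b) y) E = 0 by lra.
apply: (@lin_eq0_of_quad_ge0 _ _ (ip (sigma y) E + 2 * ip w w)) => t.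
have := hess (formv t); rewrite sigma_v Aop_v (ipZ ipP _ formw).
rewrite (ipDl ipP (rpredD formsr (rpredZ _ formry)) (rpredZ _ formsy) formE).
by rewrite (ipDl ipP formsr (rpredZ _ formry) formE) orth !(ipZl ipP) //; lra.
Qed.

Hypothesis cop : pcoprime a b.

Lemma orth_residual_of_mul r r' c : form D r -> orth_residual r' -> form (d + m) c ->
  (a ^+ 2 + b ^+ 2) * r ^+ 2 = r' * c -> orth_residual r.
Proof.
move=> homr orth_r' homc eq_rc; apply: orth_residual_of_sqr homr _.
have le_md : (m <= d)%N by rewrite -eq_d leq_addl.
rewrite eq_rc; have [y formy ->] := pcoprime_bezout cop homa homb le_md homc.
exact: orth_r'.
Qed.

Local Notation S := (dehom (a ^+ 2 + b ^+ 2)).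

Lemma orth_residual_descent g ng k r : form ng g -> (ng + k)%N = D -> form k r ->
  roots_subset (dehom r) S -> (1 < size (dehom r))%N -> orth_residual (g * r) ->
  exists r', [/\ form k r', r' != 0, (size (dehom r') < size (dehom r))%N,
                 roots_subset (dehom r') S & orth_residual (g * r')].
Proof.
move=> homg eq_D homr sub sz_gt1 orth_gr.
have homs : form (m + m) (a ^+ 2 + b ^+ 2) by rewrite /form addnn -muln2 rpredD ?dhomogMn.
set Q := dehom r; set Gd := gcdp Q S.
have szGd : (1 < size Gd)%N := size_gcdp_roots_subset sub sz_gt1.
have nzGd : Gd != 0 by rewrite -size_poly_gt0 ltnW.
pose Q' := Q %/ Gd; pose S' := S %/ Gd.
have eqQ : Q = Q' * Gd by rewrite divpK ?dvdp_gcdl.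
have eqS : S = S' * Gd by rewrite divpK ?dvdp_gcdr.
have nzQ' : Q' != 0.
  by apply: contraTneq sz_gt1 => Q'0; rewrite -/Q eqQ Q'0 mul0r size_poly0.
have szQ' : size Q' = (size Q - (size Gd).-1)%N := size_divp _ nzGd.
have szS' : size S' = (size S - (size Gd).-1)%N := size_divp _ nzGd.
have szQ := size_dehom_homog homr; have szS := size_dehom_homog homs.
have szS'Q' := size_polyMleq S' Q'.
have [le_Q' lt_Q' le_S'Q'] : [/\ (size Q' <= k.+1)%N, (size Q' < size Q)%N &
                                (size (S' * Q')%R <= (m + m + k).+1)%N].
  move: szQ' szS' szQ szS szS'Q' szGd sz_gt1; rewrite -/Q.
  move: (size Q') (size S') (size Q) (size S) (size (S' * Q')%R) (size Gd).
  by move=> *; split; lia.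
exists (hom k Q'); split; rewrite ?homK //; first exact: hom_homog.
- by rewrite -(dehom_homog_eq0 (hom_homog k Q')) homK.
- by apply: roots_subset_dvdp sub; rewrite -/Q eqQ dvdp_mulr.
pose c := hom (m + m + k) (S' * Q').
have eq_rc : (a ^+ 2 + b ^+ 2) * hom k Q' ^+ 2 = r * c.
  apply: (dehom_homog_inj (n := (m + m + k + k)%N)).
  - by apply: dhomogM_eq homs (dhomogMn 2 (hom_homog k Q')) _; lia.
  - by apply: dhomogM_eq homr (hom_homog _ _) _; lia.
  by rewrite !rmorphM /= !homK // -/Q eqQ eqS; ring.
apply: (orth_residual_of_mul (r' := g * r) (c := g * c)) => //.
- by apply: dhomogM_eq homg (hom_homog _ _) _.
- by apply: dhomogM_eq homg (hom_homog _ _) _; lia.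
by rewrite exprMn mulrCA eq_rc; ring.
Qed.

Lemma orth_residual_mulX0 g ng k r :
  form ng g -> (ng + k)%N = D -> form k r -> r != 0 -> roots_subset (dehom r) S ->
  orth_residual (g * r) -> orth_residual (g * 'X_0 ^+ k).
Proof.
move=> homg eq_D; have [n] := ubnP (size (dehom r)).
elim: n r => // n IH r lt_rn homr nzr sub orth_gr.
have [sz_le1|sz_gt1] := leqP (size (dehom r)) 1; last first.
  have [r' [homr' nzr' lt_r'r sub' orth_gr']] :=
    orth_residual_descent homg eq_D homr sub sz_gt1 orth_gr.
  exact: IH (leq_trans lt_r'r lt_rn) homr' nzr' sub' orth_gr'.
have eqr := homog_size_dehom_le1 homr sz_le1.
apply: (@orth_residualZ (dehom r)`_0); last by rewrite scalerAr -eqr.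
by apply: contra_neq nzr => c0; rewrite eqr c0 scale0r.
Qed.

End CriticalPoint.

Theorem proposition4p4 (R : realType) (d : nat) (ip : {mpoly R[2]} -> {mpoly R[2]} -> R)
    (u1 u2 p g h u1' u2' : {mpoly R[2]}) :
  inner_product (2 * d) ip ->
  form2 d (u1, u2) ->
  sos d p ->
  grad_zero d ip p (u1, u2) ->
  hess_psd d ip p (u1, u2) ->
  is_form g -> is_form h -> is_form u1' -> is_form u2' ->
  u1 = u1' * g * h ->
  u2 = u2' * g * h ->
  is_gcd u1 u2 (g * h) ->
  pcoprime u1' u2' ->
  pcoprime (u1' ^+ 2 + u2' ^+ 2) g ->
  (forall z : 'I_2 -> R[i], is_root h z -> is_root (u1' ^+ 2 + u2' ^+ 2) z) ->
  let k := deg_form h in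
  let w := (u1' * g * 'X_0 ^+ k, u2' * g * 'X_0 ^+ k) in
  in_im_plus_cone d w (u1, u2) p ->
  fp ip p (u1, u2) = 0.
Proof.
move=> ipP homu sosp grad hess [ng homg] [nh homh] forma formb eq_u1 eq_u2 _ cop _ roots.
move=> k w [v [s [formv [cone eqp]]]]; subst u1 u2; have homp := sos_form sosp.
apply: (fp_eq0_of_cone ipP homu grad hess homp cone eqp).
rewrite /w -!mulrA Aop_mulr; rewrite -!mulrA in homu grad hess.
have [g0|nzg] := eqVneq g 0.
  move: (rpredB (sigma_form homu) homp); rewrite g0 !(mul0r, mulr0).
  exact: (ip0l ipP).
have nzh := roots_subset_sqr_add_neq0 cop forma formb (roots_subset_dehom roots).
have homhk : form k h by rewrite /k (deg_form_homog homh nzh).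
have homgh : form (ng + k) (g * h) := dhomogM homg homhk.
have [m eq_d [homa homb]] :=
  pcoprime_cofactor cop forma formb homgh (mulf_neq0 nzg nzh) homu.1 homu.2.
exact: (orth_residual_mulX0 ipP homa homb homgh eq_d homp hess cop homg erefl homhk nzh
  (roots_subset_dehom roots) (orth_residual_of_grad grad)).
Qed.
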